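(* Let $\mathcal{SP}$ be the gap-insertion operad of set partitions and $\mathcal{NCP}\subset\mathcal{SP}$ its sub-operad of noncrossing partitions (defined in the context). Then the inclusion $i:\mathcal{NCP}\to\mathcal{SP}$ and the noncrossing closure $\operatorname{nc}:\mathcal{SP}\to\mathcal{NCP}$ are both morphisms of operads, and $\operatorname{nc}\circ i=\operatorname{Id}$, exhibiting $\mathcal{NCP}$ as a retract of $\mathcal{SP}$.
   Context: A partition of degree $n$ is a set partition of $[n]=\{1,\dots,n\}$ into nonempty blocks (for $n=0$ only the empty partition $\emptyset$); partitions of other finite linearly ordered sets are identified with partitions of $[n]$ via the order-preserving bijection. A partition is noncrossing if there are no $a<c<b<d$ with $a,b$ in one block and $c,d$ in a different block. Partitions of $[n]$ are ordered by refinement ($P\leq Q$ if every block of $Q$ is a union of blocks of $P$). The noncrossing closure $\operatorname{nc}(P)$ of a partition $P$ of $[n]$ is the finest noncrossing partition $Q$ of $[n]$ with $P\leq Q$. The gap-insertion operad $\mathcal{SP}$ is the non-symmetric set operad with $\mathcal{SP}(0)=\emptyset$ and, for $n\geq 1$, $\mathcal{SP}(n)$ the set of partitions of $[n-1]$ ($\mathcal{SP}(1)=\{\emptyset\}$, the unit). The partial composition, for $P=\{\pi_1,\dots,\pi_k\}\in\mathcal{SP}(m)$, $Q=\{\rho_1,\dots,\rho_l\}\in\mathcal{SP}(n)$, $i\in[m]$, is $P\diamond_i Q=\{\chi(\pi_1),\dots,\chi(\pi_k),\rho_1+i-1,\dots,\rho_l+i-1\}$ with $\chi(p)=p$ if $p<i$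 and $\chi(p)=p+n-1$ otherwise (insertion of $Q$ into the $i$-th gap of $P$). The noncrossing partitions form a sub-operad $\mathcal{NCP}$. *)

From mathcomp Require Import all_boot.
Set Implicit Arguments. Unset Strict Implicit. Unset Printing Implicit Defensive.

(* A partition of [n] is represented as a set of blocks over 'I_n
   (0-based: the element k+1 of [n] is the ordinal k). *)
Definition is_SP (n : nat) (P : {set {set 'I_n}}) : bool :=
  partition P [set: 'I_n].

Definition noncrossing (n : nat) (P : {set {set 'I_n}}) : bool :=
  [forall A in P, forall B in P, (A != B) ==>
     ~~ [exists a : 'I_n, exists b : 'I_n, exists c : 'I_n, exists d : 'I_n,
          [&& (a < c)%N, (c < b)%N, (b < d)%N,
              a \in A, b \in A, c \in B & d \in B]]].

Definition is_NCP (n : nat) (P : {set {set 'I_n}}) : bool :=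
  is_SP P && noncrossing P.

Definition refines (n : nat) (P Q : {set {set 'I_n}}) : bool :=
  [forall B in Q, exists S : {set {set 'I_n}}, (S \subset P) && (B == cover S)].

Definition is_nc_closure (n : nat) (P Q : {set {set 'I_n}}) : bool :=
  [&& is_NCP Q, refines P Q &
      [forall R : {set {set 'I_n}}, (is_NCP R && refines P R) ==> refines Q R]].

(* noncrossing closure (the choice is unique when it exists) *)
Definition nc (n : nat) (P : {set {set 'I_n}}) : {set {set 'I_n}} :=
  odflt P [pick Q | is_nc_closure P Q].

(* SP(a.+1) = partitions of 'I_a.
   For P in SP(a.+1), Q in SP(b.+1) and a gap i (0-based, i : 'I_a.+1,
   corresponding to the paper's gap i+1 in [a+1]), P \diamond_{i+1} Q is a
   partition of 'I_(a+b), i.e. an element of SP(a+b+1). *)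
Lemma shiftQ_lt (a b : nat) (i : 'I_a.+1) (y : 'I_b) : (y + i < a + b)%N.
Proof.
have hi : (i <= a)%N by rewrite -ltnS.
by rewrite -addSn [(a + b)%N]addnC; apply: leq_add.
Qed.

Lemma shiftP_lt (a b : nat) (x : 'I_a) : (x + b < a + b)%N.
Proof. by rewrite ltn_add2r. Qed.

Definition chiP (a b : nat) (i : 'I_a.+1) (x : 'I_a) : 'I_(a + b) :=
  if (x < i)%N then lshift b x else Ordinal (shiftP_lt b x).

Definition shiftQ (a b : nat) (i : 'I_a.+1) (y : 'I_b) : 'I_(a + b) :=
  Ordinal (shiftQ_lt i y).

Definition spcomp (a b : nat) (i : 'I_a.+1)
    (P : {set {set 'I_a}}) (Q : {set {set 'I_b}}) : {set {set 'I_(a + b)}} :=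
  (fun A : {set 'I_a} => [set chiP b i x | x in A]) @: P
  :|: (fun B : {set 'I_b} => [set shiftQ i y | y in B]) @: Q.

From mathcomp Require Import all_boot zify.
Set Implicit Arguments. Unset Strict Implicit. Unset Printing Implicit Defensive.

(* A partition is determined by the kernel of its block map [pblock P]:
   refinement is inclusion of kernels, and being noncrossing is a four-point
   condition on the kernel ([crossfree]) that is stable under intersections
   and under pullback along strictly increasing maps.  Hence [nc P] is the
   intersection of all noncrossing coarsenings of [P].  Gap insertion embeds
   [P] and [Q] by strictly increasing maps, [Q] onto an interval that the image
   of [P] avoids, so no crossing can involve both parts: the composite of
   noncrossing partitions is noncrossing, and pulling a noncrossing coarsening
   of the composite back along either embedding shows that composing the
   closures gives the closure of the composite. *)

Section BlockKernel.
Variable T : finType.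
Implicit Types P Q : {set {set T}}.

Lemma mem_pblockT P x : partition P [set: T] -> x \in pblock P x.
Proof. by move=> pP; rewrite mem_pblock (cover_partition pP). Qed.

Lemma pblockT_mem P x : partition P [set: T] -> pblock P x \in P.
Proof. by move=> pP; rewrite pblock_mem ?(cover_partition pP). Qed.

Lemma pblock_eqE P x y : partition P [set: T] ->
  (pblock P x == pblock P y) = (y \in pblock P x).
Proof.
by move=> pP; rewrite eq_pblock ?(partition_trivIset pP) ?(cover_partition pP).
Qed.

Lemma partition_kernel_eq P Q : partition P [set: T] -> partition Q [set: T] ->
  (forall x y, (pblock P x == pblock P y) = (pblock Q x == pblock Q y)) -> P = Q.
Proof.
move=> pP pQ kPQ; rewrite -(preim_partition_pblock pP) -(preim_partition_pblock pQ).
by apply: eq_imset => x; apply/setP => y; rewrite !inE kPQ.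
Qed.

Lemma pblock_preim_partition (rT : eqType) (g : T -> rT) x y :
  (pblock (preim_partition g [set: T]) x == pblock (preim_partition g [set: T]) y)
  = (g x == g y).
Proof.
have gE : {in [set: T] & &, equivalence_rel (fun x y => g x == g y)}.
  by move=> ? ? ? _ _ _; split=> // /eqP ->.
by rewrite pblock_eqE ?preim_partitionP // (pblock_equivalence_partition gE) ?inE.
Qed.

Lemma pblock_preim_partitionP (rT : eqType) (g : T -> rT) x y :
  pblock (preim_partition g [set: T]) x = pblock (preim_partition g [set: T]) y
  <-> g x = g y.
Proof.
split => [/eqP|gxy]; first by rewrite (pblock_preim_partition g) => /eqP.
by apply/eqP; rewrite (pblock_preim_partition g) gxy.
Qed.

Lemma partitionU P Q (D E : {set T}) : partition P D -> partition Q E ->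
  [disjoint D & E] -> partition (P :|: Q) (D :|: E).
Proof.
move=> pP pQ dDE; apply/and3P; split.
- rewrite /cover bigcup_setU -/(cover P) -/(cover Q).
  by rewrite (cover_partition pP) (cover_partition pQ).
- have dPQ A B : A \in P -> B \in Q -> [disjoint A & B].
    move=> PA QB; apply: disjointWl (partitionS pP PA) _.
    exact: disjointWr (partitionS pQ QB) dDE.
  apply/trivIsetP => A B /setUP[PA|QA] /setUP[PB|QB].
  + exact: (trivIsetP (partition_trivIset pP)).
  + by move=> _; apply: dPQ.
  + by move=> _; rewrite disjoint_sym; apply: dPQ.
  + exact: (trivIsetP (partition_trivIset pQ)).
- by rewrite inE negb_or (partition0 pP) (partition0 pQ).
Qed.

End BlockKernel.

Definition crossfree n (X : Type) (g : 'I_n -> X) : Prop :=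
  forall a c b d : 'I_n, a < c -> c < b -> b < d -> g a = g b -> g c = g d -> g a = g c.

Lemma crossfree_comp m n (X : Type) (f : 'I_m -> 'I_n) (g : 'I_n -> X) :
  {mono f : x y / x < y} -> crossfree g -> crossfree (g \o f).
Proof. by move=> fmono gcross a c b d; rewrite -!fmono; apply: gcross. Qed.

Section Noncrossing.
Variable n : nat.
Implicit Types P Q R : {set {set 'I_n}}.

Lemma refinesP P Q : is_SP P -> is_SP Q ->
  reflect (forall x y, pblock P x = pblock P y -> pblock Q x = pblock Q y)
          (refines P Q).
Proof.
move=> pP pQ; apply: (iffP forall_inP) => [rPQ x y /eqP|kPQ B QB].
  rewrite pblock_eqE // => yPx.
  have /existsP[S /andP[/subsetP SP /eqP defB]] := rPQ _ (pblockT_mem x pQ).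
  have /bigcupP[A SA xA] : x \in cover S by rewrite -defB mem_pblockT.
  apply/eqP; rewrite pblock_eqE // defB; apply/bigcupP; exists A => //.
  by rewrite -(def_pblock (partition_trivIset pP) (SP _ SA) xA).
apply/existsP; exists (pblock P @: B); apply/andP; split.
  by apply/subsetP => _ /imsetP[x _ ->]; apply: pblockT_mem.
apply/eqP/setP => z; apply/idP/bigcupP => [zB|[_ /imsetP[x xB ->] zPx]].
  by exists (pblock P z); [apply: imset_f | apply: mem_pblockT].
rewrite -(def_pblock (partition_trivIset pQ) QB xB) -pblock_eqE //.
by apply/eqP/kPQ/eqP; rewrite pblock_eqE.
Qed.

Lemma noncrossingP P : is_SP P -> reflect (crossfree (pblock P)) (noncrossing P).
Proof.
move=> pP; have tP := partition_trivIset pP.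
apply: (iffP forall_inP) => [ncP a c b d ac cb bd eab ecd | cfP A PA].
  have [//|neq] := eqVneq (pblock P a) (pblock P c).
  have /forall_inP/(_ _ (pblockT_mem c pP)) := ncP _ (pblockT_mem a pP).
  move=> /implyP/(_ neq)/negP[].
  apply/existsP; exists a; apply/existsP; exists b; apply/existsP; exists c.
  apply/existsP; exists d; rewrite ac cb bd !mem_pblockT // eab ecd.
  by rewrite !mem_pblockT.
apply/forall_inP => B PB; apply/implyP => neqAB; apply/negP.
case/existsP => a /existsP[b /existsP[c /existsP[d]]].
case/and5P => ac cb bd aA /and3P[bA cB dB]; move/eqP: neqAB; apply.
rewrite -(def_pblock tP PA aA) -(def_pblock tP PB cB).
apply: (cfP a c b d) => //.
  by rewrite (def_pblock tP PA aA) (def_pblock tP PA bA).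
by rewrite (def_pblock tP PB cB) (def_pblock tP PB dB).
Qed.

Lemma NCP_crossfree R : is_NCP R -> crossfree (pblock R).
Proof. by case/andP => pR /(noncrossingP pR). Qed.

Lemma preim_partition_NCP (rT : eqType) (g : 'I_n -> rT) :
  crossfree g -> is_NCP (preim_partition g [set: 'I_n]).
Proof.
move=> cfg; have pg := preim_partitionP g [set: 'I_n].
apply/andP; split => //; apply/noncrossingP => // a c b d ac cb bd.
move=> /eqP + /eqP; rewrite !pblock_preim_partition => /eqP gab /eqP gcd.
by apply/eqP; rewrite pblock_preim_partition (cfg a c b d ac cb bd gab gcd).
Qed.

Lemma refines_anti P Q : is_SP P -> is_SP Q -> refines P Q -> refines Q P -> P = Q.
Proof.
move=> pP pQ /(refinesP pP pQ) kPQ /(refinesP pQ pP) kQP.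
by apply: partition_kernel_eq => // x y; apply/eqP/eqP => [/kPQ|/kQP].
Qed.

(* [x] and [y] have the same signature iff they share a block in every
   noncrossing coarsening of [P]; the value [set0] elsewhere is a dummy. *)
Definition nc_signature P (x : 'I_n) : {ffun {set {set 'I_n}} -> {set 'I_n}} :=
  [ffun R => if is_NCP R && refines P R then pblock R x else set0].

Lemma nc_signature_eq P x y :
  nc_signature P x = nc_signature P y <->
  (forall R, is_NCP R -> refines P R -> pblock R x = pblock R y).
Proof.
split => [sxy R nR rR | exy]; last first.
  by apply/ffunP => R; rewrite !ffunE; case: ifP => // /andP[]; apply: exy.
by move: (congr1 (fun s : {ffun _ -> _} => s R) sxy); rewrite !ffunE nR rR.
Qed.

Lemma crossfree_nc_signature P : crossfree (nc_signature P).
Proof.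
move=> a c b d ac cb bd /nc_signature_eq eab /nc_signature_eq ecd.
apply/nc_signature_eq => R nR rR.
exact: (NCP_crossfree nR) ac cb bd (eab R nR rR) (ecd R nR rR).
Qed.

Lemma nc_closure_signature P :
  is_SP P -> is_nc_closure P (preim_partition (nc_signature P) [set: 'I_n]).
Proof.
move=> pP; set N := preim_partition _ _; have pN : is_SP N := preim_partitionP _ _.
have kN x y : pblock N x = pblock N y <-> nc_signature P x = nc_signature P y.
  exact: pblock_preim_partitionP.
apply/and3P; split; first exact/preim_partition_NCP/crossfree_nc_signature.
  apply/refinesP => // x y ePxy; apply/kN/nc_signature_eq => R /andP[pR _] rPR.
  exact: (refinesP pP pR rPR).
apply/forallP => R; apply/implyP => /andP[nR rPR]; have /andP[pR _] := nR.
by apply/refinesP => // x y /kN /nc_signature_eq; apply.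
Qed.

Lemma nc_closure_uniq P N1 N2 : is_nc_closure P N1 -> is_nc_closure P N2 -> N1 = N2.
Proof.
case/and3P => nN1 rN1 /forallP minN1; case/and3P => nN2 rN2 /forallP minN2.
apply: refines_anti; [by case/andP: nN1 | by case/andP: nN2 | |].
  by apply: (implyP (minN1 N2)); rewrite nN2 rN2.
by apply: (implyP (minN2 N1)); rewrite nN1 rN1.
Qed.

Lemma nc_closure P : is_SP P -> is_nc_closure P (nc P).
Proof.
move=> pP; rewrite /nc; case: pickP => [//|none].
by have := nc_closure_signature pP; rewrite none.
Qed.

Lemma nc_closureE P N : is_SP P -> is_nc_closure P N -> nc P = N.
Proof. by move=> pP; apply: nc_closure_uniq (nc_closure pP). Qed.

Lemma nc_NCP P : is_SP P -> is_NCP (nc P).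
Proof. by move=> pP; case/and3P: (nc_closure pP). Qed.

Lemma nc_refines P : is_SP P -> refines P (nc P).
Proof. by move=> pP; case/and3P: (nc_closure pP). Qed.

Lemma nc_min P R : is_SP P -> is_NCP R -> refines P R -> refines (nc P) R.
Proof.
by move=> pP nR rPR; case/and3P: (nc_closure pP) => _ _ /forallP/(_ R); rewrite nR rPR.
Qed.

Lemma nc_id P : is_NCP P -> nc P = P.
Proof.
move=> nP; have /andP[pP _] := nP; apply: nc_closureE => //.
apply/and3P; split => //; first exact/refinesP.
by apply/forallP => R; apply/implyP => /andP[].
Qed.

End Noncrossing.

Lemma nc_pullback m n (f : 'I_m -> 'I_n) (P : {set {set 'I_m}}) (R : {set {set 'I_n}}) :
  {mono f : x y / x < y} -> is_SP P -> is_NCP R ->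
  (forall x y, pblock P x = pblock P y -> pblock R (f x) = pblock R (f y)) ->
  forall x y, pblock (nc P) x = pblock (nc P) y -> pblock R (f x) = pblock R (f y).
Proof.
move=> fmono pP nR fPR; set E := preim_partition (pblock R \o f) [set: 'I_m].
have kE x y : pblock E x = pblock E y <-> pblock R (f x) = pblock R (f y).
  exact: pblock_preim_partitionP.
have nE : is_NCP E by apply/preim_partition_NCP/crossfree_comp/NCP_crossfree.
have pE : is_SP E by case/andP: nE.
have rPE : refines P E by apply/refinesP => // x y /fPR /kE.
have pN : is_SP (nc P) by case/andP: (nc_NCP pP).
by move=> x y /(refinesP pN pE (nc_min pP nE rPE)) /kE.
Qed.

Section GapInsertion.
Variables (a b : nat) (i : 'I_a.+1).
Local Notation chi := (chiP b i).
Local Notation shift := (@shiftQ a b i).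

Lemma chiP_val x : nat_of_ord (chi x) = if x < i then nat_of_ord x else x + b.
Proof. by rewrite /chiP; case: ifP. Qed.

Lemma chiP_mono : {mono chi : x y / x < y}.
Proof. by move=> x y; rewrite !chiP_val; case: ifP; case: ifP; lia. Qed.

Lemma shiftQ_mono : {mono shift : x y / x < y}.
Proof. by move=> x y /=; lia. Qed.

Lemma chiP_inj : injective chi.
Proof.
move=> x y /(congr1 (@nat_of_ord _)) /=; rewrite !chiP_val => exy; apply: ord_inj => /=.
by move: exy; case: ifP; case: ifP; lia.
Qed.

Lemma shiftQ_inj : injective shift.
Proof. by move=> x y /(congr1 (@nat_of_ord _)) /= exy; apply: ord_inj => /=; lia. Qed.

Lemma chiP_outside x : (chi x < i) || (i + b <= chi x).
Proof. by rewrite chiP_val; case: ifP; lia. Qed.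

Lemma shiftQ_inside y : i <= shift y < i + b.
Proof. by have := ltn_ord y; rewrite /=; lia. Qed.

Lemma chiP_neq_shiftQ x y : chi x != shift y.
Proof.
apply/eqP => /(congr1 (@nat_of_ord _)) exy.
by have := chiP_outside x; have := shiftQ_inside y; rewrite exy; lia.
Qed.

Variant insert_spec (u : 'I_(a + b)) : Prop :=
  | InsertOuter x of u = chi x
  | InsertInner y of u = shift y.

Lemma insertP u : insert_spec u.
Proof.
have ltu := ltn_ord u; have lti := ltn_ord i.
have [ui|iu] := ltnP u i.
  have ua : u < a by lia.
  by apply: (InsertOuter (x := Ordinal ua)); apply: ord_inj; rewrite chiP_val /= ui.
have [ub|bu] := ltnP u (i + b).
  have ub' : u - i < b by lia.
  by apply: (InsertInner (y := Ordinal ub')); apply: ord_inj => /=; lia.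
have ua : u - b < a by lia.
apply: (InsertOuter (x := Ordinal ua)); apply: ord_inj; rewrite chiP_val /=.
by case: ifP; lia.
Qed.

Lemma insert_cover : chi @: [set: 'I_a] :|: shift @: [set: 'I_b] = [set: 'I_(a + b)].
Proof.
apply/setP => u; rewrite !inE; case: (insertP u) => [x|y] ->.
  by rewrite imset_f.
by rewrite imset_f ?orbT.
Qed.

Lemma insert_disjoint : [disjoint chi @: [set: 'I_a] & shift @: [set: 'I_b]].
Proof.
apply/pred0P => u /=; apply/negbTE/andP => -[/imsetP[x _ ->] /imsetP[y _ /eqP]].
by rewrite (negbTE (chiP_neq_shiftQ x y)).
Qed.

Variables (P : {set {set 'I_a}}) (Q : {set {set 'I_b}}).
Hypotheses (pP : is_SP P) (pQ : is_SP Q).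
Local Notation S := (spcomp i P Q).

Lemma spcomp_SP : is_SP S.
Proof.
rewrite /is_SP -insert_cover; apply: partitionU insert_disjoint.
  by rewrite imset_partition //; apply: chiP_inj.
by rewrite imset_partition //; apply: shiftQ_inj.
Qed.

Lemma pblock_spcomp_chiP x : pblock S (chi x) = chi @: pblock P x.
Proof.
apply: def_pblock (partition_trivIset spcomp_SP) _ (imset_f _ (mem_pblockT x pP)).
by rewrite inE imset_f ?pblockT_mem.
Qed.

Lemma pblock_spcomp_shiftQ y : pblock S (shift y) = shift @: pblock Q y.
Proof.
apply: def_pblock (partition_trivIset spcomp_SP) _ (imset_f _ (mem_pblockT y pQ)).
by rewrite inE imset_f ?pblockT_mem ?orbT.
Qed.

Variant spcomp_kernel_spec (u w : 'I_(a + b)) : Prop :=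
  | KernelOuter x y of u = chi x & w = chi y & pblock P x = pblock P y
  | KernelInner x y of u = shift x & w = shift y & pblock Q x = pblock Q y.

Lemma spcomp_kernelP u w : pblock S u = pblock S w -> spcomp_kernel_spec u w.
Proof.
case: (insertP u) => [x|x] ->; case: (insertP w) => [y|y] ->;
  rewrite ?pblock_spcomp_chiP ?pblock_spcomp_shiftQ.
- by move/(imset_inj chiP_inj); apply: KernelOuter.
- move/setP/(_ (chi x)); rewrite imset_f ?mem_pblockT // => /esym/imsetP[z _ /eqP].
  by rewrite (negbTE (chiP_neq_shiftQ _ _)).
- move/setP/(_ (shift x)); rewrite imset_f ?mem_pblockT // => /esym/imsetP[z _ /eqP].
  by rewrite eq_sym (negbTE (chiP_neq_shiftQ _ _)).
- by move/(imset_inj shiftQ_inj); apply: KernelInner.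
Qed.

End GapInsertion.

Lemma spcomp_NCP a b (i : 'I_a.+1) (P : {set {set 'I_a}}) (Q : {set {set 'I_b}}) :
  is_NCP P -> is_NCP Q -> is_NCP (spcomp i P Q).
Proof.
move=> /andP[pP /(noncrossingP pP) cfP] /andP[pQ /(noncrossingP pQ) cfQ].
have pS := spcomp_SP i pP pQ; apply/andP; split => //.
apply/noncrossingP => // u c w d uc cw wd.
case/(spcomp_kernelP pP pQ) => [x y eu ew exy|x y eu ew exy];
case/(spcomp_kernelP pP pQ) => [z t ec ed ezt|z t ec ed ezt]; subst u w c d.
- move: uc cw wd; rewrite !chiP_mono => xz zy yt.
  by rewrite !pblock_spcomp_chiP // (cfP x z y t).
- have := chiP_outside b i y; have := shiftQ_inside i z.
  by have := shiftQ_inside i t; lia.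
- have := shiftQ_inside i x; have := shiftQ_inside i y.
  by have := chiP_outside b i z; lia.
- move: uc cw wd; rewrite !shiftQ_mono => xz zy yt.
  by rewrite !pblock_spcomp_shiftQ // (cfQ x z y t).
Qed.

Lemma nc_spcomp a b (i : 'I_a.+1) (P : {set {set 'I_a}}) (Q : {set {set 'I_b}}) :
  is_SP P -> is_SP Q -> nc (spcomp i P Q) = spcomp i (nc P) (nc Q).
Proof.
move=> pP pQ; have pS := spcomp_SP i pP pQ.
have nNP := nc_NCP pP; have nNQ := nc_NCP pQ.
have /andP[pNP _] := nNP; have /andP[pNQ _] := nNQ.
have nN := spcomp_NCP i nNP nNQ; have /andP[pN _] := nN.
apply: nc_closureE => //; apply/and3P; split => //.
  apply/refinesP => // u w /(spcomp_kernelP pP pQ) [x y -> -> exy|x y -> -> exy].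
    by rewrite !pblock_spcomp_chiP // (refinesP pP pNP (nc_refines pP) _ _ exy).
  by rewrite !pblock_spcomp_shiftQ // (refinesP pQ pNQ (nc_refines pQ) _ _ exy).
apply/forallP => R; apply/implyP => /andP[nR rSR]; have /andP[pR _] := nR.
have kSR := refinesP pS pR rSR.
apply/refinesP => // u w /(spcomp_kernelP pNP pNQ) [x y -> -> exy|x y -> -> exy].
  apply: (nc_pullback (chiP_mono b i) pP nR _ exy) => x' y' exy'.
  by apply: kSR; rewrite !pblock_spcomp_chiP // exy'.
apply: (nc_pullback (shiftQ_mono i) pQ nR _ exy) => x' y' exy'.
by apply: kSR; rewrite !pblock_spcomp_shiftQ // exy'.
Qed.

Lemma NCP0 : is_NCP (set0 : {set {set 'I_0}}).
Proof.
apply/andP; split; last by apply/forall_inP => A; rewrite inE.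
rewrite /is_SP (_ : [set: 'I_0] = set0) ?partition_set0 //.
by apply/setP => -[].
Qed.

Theorem mainTheorem2 :
  (* NCP is a sub-operad of SP, so the inclusion i : NCP -> SP is a morphism *)
  is_NCP (set0 : {set {set 'I_0}}) /\
  (forall (a b : nat) (i : 'I_a.+1) (P : {set {set 'I_a}}) (Q : {set {set 'I_b}}),
      is_NCP P -> is_NCP Q -> is_NCP (spcomp i P Q)) /\
  (* nc is a well-defined map SP -> NCP *)
  (forall (n : nat) (P : {set {set 'I_n}}), is_SP P -> is_NCP (nc P)) /\
  (* nc preserves the unit and the partial compositions *)
  nc (set0 : {set {set 'I_0}}) = set0 /\
  (forall (a b : nat) (i : 'I_a.+1) (P : {set {set 'I_a}}) (Q : {set {set 'I_b}}),
      is_SP P -> is_SP Q -> nc (spcomp i P Q) = spcomp i (nc P) (nc Q)) /\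
  (* nc o i = Id *)
  (forall (n : nat) (P : {set {set 'I_n}}), is_NCP P -> nc P = P).
Proof.
split; first exact: NCP0.
split; first exact: spcomp_NCP.
split; first exact: nc_NCP.
split; first exact: nc_id NCP0.
split; first exact: nc_spcomp.
exact: nc_id.
Qed.
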